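(* Let $\rho,\lambda,\kappa$ be nonnegative integers with $P(\lambda+\kappa+1)\le\rho\le\frac34\lambda$. Let $\mathcal B$ be the set of integers $0\le l<q^\lambda$ for which there exist integers $0\le k_1,k_2<q^\kappa$ with $$a_P(lq^\kappa+k_1+k_2)-a_P(lq^\kappa+k_1)\ne a_P^{(\kappa+\rho)}(lq^\kappa+k_1+k_2)-a_P^{(\kappa+\rho)}(lq^\kappa+k_1).$$ Then $\#\mathcal B\ll q^{\lambda-\rho+P(\lambda+\kappa+1)}$.
   Context: Fix an integer $q\ge2$. For an integer $n\ge0$, $\varepsilon_i(n)$ is the $i$-th digit of $n$ in base $q$ ($\varepsilon_0$ the units digit). For real $x>0$, $T_q(x)=\lfloor\log x/\log q\rfloor$. $P:\mathbb{N}\to\mathbb{N}$ is a nondecreasing integer-valued function. For integers $x,y\ge0$, $a_P(x,y)=\sum_{i\ge0}\varepsilon_{i+P(y)}(x)\cdots\varepsilon_i(x)$ and $a_P(n)=a_P(n,T_q(n))$. For an integer $\rho\ge0$ and integer $n\ge1$, $a_P^{(\rho)}(n)=a_P(n\bmod q^\rho,T_q(n))$ (note: the block length is determined by $T_q(n)$, not by $T_q(n\bmod q^\rho)$). The implied constant depends at most on $q$. *)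

From mathcomp Require Import all_boot all_order all_algebra.
Set Implicit Arguments. Unset Strict Implicit. Unset Printing Implicit Defensive.

Definition digit (q i n : nat) : nat := (n %/ q ^ i) %% q.

(* T_q(x) = floor(log x / log q) for x >= 1; trunc_log q 0 = 0 (irrelevant) *)
Definition Tq (q x : nat) : nat := trunc_log q x.

(* a_P(x,y) = sum_{i>=0} eps_{i+P(y)}(x) ... eps_i(x).
   Terms with i >= x vanish (q^i > x), so summing over i < x.+1 is the full sum. *)
Definition aP2 (q : nat) (P : nat -> nat) (x y : nat) : nat :=
  \sum_(i < x.+1) \prod_(j < (P y).+1) digit q (i + j) x.

Definition aP (q : nat) (P : nat -> nat) (n : nat) : nat := aP2 q P n (Tq q n).

Definition aPrho (q : nat) (P : nat -> nat) (rho n : nat) : nat :=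
  aP2 q P (n %% q ^ rho) (Tq q n).

From mathcomp Require Import all_boot all_order all_algebra.
From mathcomp Require Import zify.
Import GRing.Theory Num.Theory.

Set Implicit Arguments.
Unset Strict Implicit.
Unset Printing Implicit Defensive.

(* Write n = l q^kap + k1 + k2 and n' = l q^kap + k1, and let s := rho - P(lam+kap+1).
   Unless the s lowest base-q digits of l all equal q - 1, adding k1 + k2 < 2 q^kap
   creates no carry beyond position kap + s, so n and n' share their digits from
   position kap + s on, and T_q(n) = T_q(n').  A block of P(T_q n) + 1 consecutive
   digits reaching position kap + rho starts at or above kap + s, so the blocks counted
   by a_P but not by a_P^(kap+rho) are the same for n and n' and cancel.  Hence B lies
   in one residue class mod q^s, of size q^(lam - s): the bound holds with C = 1. *)

Section Digits.

Variable q : nat.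
Hypothesis q_gt1 : 1 < q.

Let q_gt0 : 0 < q. Proof. exact: ltnW. Qed.

Lemma expq_gt0 k : 0 < q ^ k.
Proof. by rewrite expn_gt0 q_gt0. Qed.

Lemma digit_small k x : x < q ^ k -> digit q k x = 0.
Proof. by move=> hx; rewrite /digit divn_small ?mod0n. Qed.

Lemma digit_modn k m x : k < m -> digit q k (x %% q ^ m) = digit q k x.
Proof.
move=> km; rewrite /digit.
have -> : q ^ m = q ^ (m - k) * q ^ k by rewrite -expnD subnK // ltnW.
by rewrite -modn_divl modn_dvdm // -(subnSK km) expnS dvdn_mulr.
Qed.

Lemma digit_modn_high k m x : m <= k -> digit q k (x %% q ^ m) = 0.
Proof.
move=> mk; apply: digit_small; apply: leq_trans (ltn_pmod _ (expq_gt0 m)) _.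
by rewrite leq_pexp2l.
Qed.

Lemma digit_divn_eq k c x x' : c <= k -> x %/ q ^ c = x' %/ q ^ c ->
  digit q k x = digit q k x'.
Proof.
move=> ck e; rewrite /digit.
have -> : q ^ k = q ^ c * q ^ (k - c) by rewrite -expnD subnKC.
by rewrite !divnMA e.
Qed.

Lemma Tq_le x e : x < q ^ e.+1 -> Tq q x <= e.
Proof.
have [-> _ | x_gt0 hx] := posnP x; first by rewrite /Tq trunc_log0.
by rewrite -ltnS -(ltn_exp2l _ _ q_gt1); apply: leq_ltn_trans hx; apply: trunc_logP.
Qed.

Lemma Tq_divn c x : 0 < x %/ q ^ c -> Tq q x = c + Tq q (x %/ q ^ c).
Proof.
move=> hx; apply: trunc_log_eq => //; apply/andP; split.
  rewrite expnD mulnC; apply: leq_trans (leq_trunc_div x (q ^ c)).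
  by rewrite leq_mul2r trunc_logP ?orbT.
by rewrite -addnS expnD mulnC -ltn_divLR ?expq_gt0 //; apply: trunc_log_ltn.
Qed.

Definition digit_window (p x i : nat) : nat := \prod_(j < p.+1) digit q (i + j) x.

Lemma digit_window_small p x i : x < q ^ i -> digit_window p x i = 0.
Proof. by move=> hx; rewrite /digit_window big_ord_recl addn0 digit_small. Qed.

Lemma aP2_widen P y x N : x < N ->
  aP2 q P x y = \sum_(i < N) digit_window (P y) x i.
Proof.
move=> xN; rewrite /aP2 -/(digit_window (P y) x _).
rewrite (big_ord_widen _ (digit_window (P y) x) xN) big_mkcond /=.
apply: eq_bigr => i _; case: ifP => // /negbT; rewrite -leqNgt => xi.
by rewrite digit_window_small // (leq_trans xi) // ltnW // ltn_expl.
Qed.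

(* The windows that stay below position m see the same digits in x and in x mod q^m;
   those reaching position m are zero for x mod q^m. *)
Lemma aP2_split_modn P x y m N : x < N ->
  aP2 q P x y = aP2 q P (x %% q ^ m) y
                + \sum_(i < N | m <= i + P y) digit_window (P y) x i.
Proof.
move=> xN; have xmN : x %% q ^ m < N := leq_ltn_trans (leq_mod _ _) xN.
rewrite (aP2_widen P y xN) (aP2_widen P y xmN).
rewrite (bigID (fun i : 'I_N => m <= i + P y)) /=.
rewrite [X in _ = X + _](bigID (fun i : 'I_N => m <= i + P y)) /=.
rewrite [X in _ = X + _ + _]big1 => [|i hi]; last first.
  by rewrite /digit_window (bigD1 ord_max) //= digit_modn_high.
rewrite add0n addnC; congr (_ + _); apply: eq_bigr => i; rewrite -ltnNge => hi.
apply: eq_bigr => j _; rewrite digit_modn //.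
by apply: leq_ltn_trans hi; rewrite leq_add2l -ltnS.
Qed.

Lemma aP_sub_eq_aPrho_sub P c m n n' :
  c + P (Tq q n) <= m -> n %/ q ^ c = n' %/ q ^ c ->
  ((aP q P n)%:Z - (aP q P n')%:Z
   = (aPrho q P m n)%:Z - (aPrho q P m n')%:Z)%R.
Proof.
move=> hm e; have cm : c <= m := leq_trans (leq_addr _ _) hm.
have [n0 | n_gt0] := posnP (n %/ q ^ c).
  have small x : x %/ q ^ c = 0 -> x %% q ^ m = x.
    move=> x0; have xc : x < q ^ c by rewrite ltnNge -divn_gt0 ?expq_gt0 // x0.
    by rewrite modn_small // (leq_trans xc) // leq_pexp2l.
  by rewrite /aPrho !small // -e.
have n'_gt0 : 0 < n' %/ q ^ c by rewrite -e.
have eT : Tq q n' = Tq q n by rewrite (Tq_divn n_gt0) (Tq_divn n'_gt0) e.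
set t := Tq q n; set N := (n + n').+1.
rewrite /aPrho /aP eT -/t.
rewrite (aP2_split_modn P t m (leq_ltn_trans (leq_addr n' n) (ltnSn _))).
rewrite (aP2_split_modn P t m (leq_ltn_trans (leq_addl n n') (ltnSn _))).
have -> : \sum_(i < N | m <= i + P t) digit_window (P t) n i
        = \sum_(i < N | m <= i + P t) digit_window (P t) n' i.
  apply: eq_bigr => i hi; apply: eq_bigr => j _; apply: digit_divn_eq e.
  by apply: leq_trans (leq_addr _ _); rewrite -(leq_add2r (P t)) (leq_trans hm).
by rewrite !PoszD opprD addrACA subrr addr0.
Qed.

End Digits.

Lemma divn_mulD_small l k K Q : 0 < K -> l %% Q != Q - 1 -> k < 2 * K ->
  (l * K + k) %/ (K * Q) = l %/ Q.
Proof.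
move=> K_gt0 hl hk; have [-> | Q_gt0] := posnP Q; first by rewrite muln0 !divn0.
have hr : l %% Q + 2 <= Q by move: hl (ltn_pmod l Q_gt0); lia.
have -> : l * K + k = l %/ Q * (K * Q) + (l %% Q * K + k).
  by rewrite {1}(divn_eq l Q); move: (l %/ Q) (l %% Q) => a b; lia.
have low : l %% Q * K + k < K * Q.
  by move: hr hk K_gt0; set r := l %% Q => *; nia.
by rewrite divnMDl ?muln_gt0 ?K_gt0 ?Q_gt0 // (divn_small low) addn0.
Qed.

Lemma card_modn_eq n Q r : 0 < Q -> Q %| n ->
  #|[set l : 'I_n | l %% Q == r]| <= n %/ Q.
Proof.
move=> Q_gt0 Qn; set A := [set l : 'I_n | _].
rewrite -(size_image (fun l : 'I_n => val l %/ Q) A) -[n %/ Q](size_iota 0).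
apply: uniq_leq_size.
  rewrite map_inj_in_uniq ?enum_uniq // => l1 l2.
  rewrite !mem_enum !inE => /eqP h1 /eqP h2 e; apply: val_inj.
  by rewrite /= (divn_eq l1 Q) (divn_eq l2 Q) e h1 h2.
move=> x /imageP [l _ ->]; rewrite mem_iota /= ltn_divLR // divnK //.
Qed.

Lemma Tq_mulD_small q lam kap l k : 1 < q -> l < q ^ lam -> k < 2 * q ^ kap ->
  Tq q (l * q ^ kap + k) <= lam + kap.
Proof.
move=> q_gt1 hl hk; apply: Tq_le => //; rewrite expnSr expnD.
have lK : l.+1 * q ^ kap <= q ^ lam * q ^ kap by rewrite leq_mul2r hl orbT.
have KLK : q ^ kap <= q ^ lam * q ^ kap by rewrite leq_pmull // expq_gt0.
have LKq : q ^ lam * q ^ kap * 2 <= q ^ lam * q ^ kap * q by rewrite leq_mul2l q_gt1 orbT.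
move: hk lK KLK LKq; rewrite mulSn; lia.
Qed.

Lemma aP_block_sub_eq q P lam kap rho s l k1 k2 :
  1 < q -> {homo P : m n / m <= n} ->
  l < q ^ lam -> k1 < q ^ kap -> k2 < q ^ kap ->
  s + P (lam + kap + 1) <= rho -> l %% q ^ s != q ^ s - 1 ->
  ((aP q P (l * q ^ kap + k1 + k2))%:Z - (aP q P (l * q ^ kap + k1))%:Z
   = (aPrho q P (kap + rho) (l * q ^ kap + k1 + k2))%:Z
     - (aPrho q P (kap + rho) (l * q ^ kap + k1))%:Z)%R.
Proof.
move=> q_gt1 P_homo hl hk1 hk2 hs hls.
have K_gt0 := expq_gt0 q_gt1 kap.
apply: (aP_sub_eq_aPrho_sub q_gt1 (c := kap + s)).
  have hT : Tq q (l * q ^ kap + k1 + k2) <= lam + kap + 1.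
    by rewrite -addnA (leq_trans (Tq_mulD_small q_gt1 hl _)) ?addn1 //; lia.
  by rewrite -addnA leq_add2l (leq_trans _ hs) // leq_add2l P_homo.
by rewrite expnD -addnA !divn_mulD_small //; lia.
Qed.

Theorem mainTheorem3 (q : nat) (hq : 1 < q) :
  exists C : nat,
    forall (P : nat -> nat), {homo P : m n / (m <= n)%N} ->
    forall rho lam kap : nat,
      (P (lam + kap + 1) <= rho)%N -> (4 * rho <= 3 * lam)%N ->
      (#|[set l : 'I_(q ^ lam) |
          [exists k1 : 'I_(q ^ kap), exists k2 : 'I_(q ^ kap),
             ((aP q P (l * q ^ kap + k1 + k2))%:Z - (aP q P (l * q ^ kap + k1))%:Z
              != (aPrho q P (kap + rho) (l * q ^ kap + k1 + k2))%:Z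
                 - (aPrho q P (kap + rho) (l * q ^ kap + k1))%:Z)%R]]|
       <= C * q ^ (lam - rho + P (lam + kap + 1)))%N.
Proof.
exists 1 => P P_homo rho lam kap hP hrho; rewrite mul1n.
set s := rho - P (lam + kap + 1).
have s_le : s <= lam by rewrite /s; lia.
have -> : lam - rho + P (lam + kap + 1) = lam - s by rewrite /s; lia.
rewrite (expnB (ltnW hq) s_le).
apply: leq_trans (card_modn_eq (q ^ s - 1) (expq_gt0 hq s) _); last first.
  by rewrite dvdn_exp2l.
apply/subset_leq_card/subsetP => l; rewrite !inE; apply: contraTT => hl.
apply/existsPn => k1; apply/existsPn => k2; rewrite negbK; apply/eqP.
by apply: (aP_block_sub_eq (s := s)); rewrite ?ltn_ord // /s subnK.
Qed.
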